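(* Let $N\ge 2$ be an integer and $\tau>0$. For $t\in\{0,\tau,2\tau,\dots\}$ let $u_j^t=u(j,t)$, $j=0,\dots,N$, be defined by prescribed initial values $u(j,0)$, the Dirichlet boundary condition $u_0^t=u_N^t=0$ for all $t$, and the iteration, for $j=1,\dots,N-1$, $$u_j^{t+\tau}=u_j^t+\frac{u_j^tu_{j-1}^t}{2}\bigl(u_j^t+u_{j-1}^t-1\bigr)\bigl(u_{j-1}^t-u_j^t\bigr)+\frac{u_j^tu_{j+1}^t}{2}\bigl(u_j^t+u_{j+1}^t-1\bigr)\bigl(u_{j+1}^t-u_j^t\bigr).$$ Suppose $1/2\le u(j,0)\le 1$ for $j=1,\dots,N-1$. Then for all $t\in\{0,\tau,2\tau,\dots\}$ and all $j=1,\dots,N-1$, $$\min_{1\le i\le N-1}u(i,0)\le u(j,t)\le \max_{1\le i\le N-1}u(i,0).$$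
   Context: This is an aggregation–diffusion lattice model on the grid points $x_j=j/N$ with time step $\tau$; the value $1/2$ is the density threshold $\alpha$ separating aggregation (below) and diffusion (above). *)

From mathcomp Require Import all_boot all_order all_algebra.
Set Implicit Arguments. Unset Strict Implicit. Unset Printing Implicit Defensive.
Import Order.TTheory GRing.Theory Num.Theory.
Local Open Scope ring_scope.

Definition interior (N j : nat) : bool := (0 < j)%N && (j < N)%N.

Definition step (R : realFieldType) (N : nat) (v : nat -> R) : nat -> R :=
  fun j =>
    if interior N j then
      v j
      + (v j * v j.-1) / 2 * (v j + v j.-1 - 1) * (v j.-1 - v j)
      + (v j * v j.+1) / 2 * (v j + v j.+1 - 1) * (v j.+1 - v j)
    else 0.

(* u N u0 n j = u(j, n*tau): the solution after n time steps, with initial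
   interior data u0 and Dirichlet boundary u_0 = u_N = 0. *)
Fixpoint sol (R : realFieldType) (N : nat) (u0 : nat -> R) (n : nat) : nat -> R :=
  match n with
  | 0 => fun j => if interior N j then u0 j else 0
  | n'.+1 => step N (sol N u0 n')
  end.

(* min and max over 1 <= i <= N-1 (seeded with u0 1, which is in the range for N >= 2) *)
Definition min_init (R : realFieldType) (N : nat) (u0 : nat -> R) : R :=
  \big[Num.min/u0 1%N]_(1 <= i < N) u0 i.
Definition max_init (R : realFieldType) (N : nat) (u0 : nat -> R) : R :=
  \big[Num.max/u0 1%N]_(1 <= i < N) u0 i.

From mathcomp Require Import all_boot all_order all_algebra.
From mathcomp Require Import lra zify.
Set Implicit Arguments. Unset Strict Implicit. Unset Printing Implicit Defensive.
Import Order.TTheory GRing.Theory Num.Theory.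
Local Open Scope ring_scope.

(* Each update is a convex combination: the new value at j is
   (1 - c - c') u_j + c u_{j-1} + c' u_{j+1}, with weights
   c = u_j u_{j-1} (u_j + u_{j-1} - 1) / 2 in [0, 1/2] as long as all values
   lie in [1/2, 1] (a boundary neighbour 0 gets weight 0).  Hence every
   interval [m, M] inside [1/2, 1] containing the initial data is invariant. *)

Definition weight (R : realFieldType) (a b : R) : R := a * b / 2 * (a + b - 1).

Lemma weight_bounds (R : realFieldType) (a b : R) :
  1 / 2 <= a <= 1 -> 1 / 2 <= b <= 1 -> 0 <= weight a b <= 1 / 2.
Proof.
rewrite /weight => /andP[a_ge a_le] /andP[b_ge b_le].
have ab_le1 : a * b <= 1 by rewrite -[1]mul1r; apply: ler_pM; lra.
have ab_ge0 : 0 <= a * b by apply: mulr_ge0; lra.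
have s_le1 : a + b - 1 <= 1 by lra.
have s_ge0 : 0 <= a + b - 1 by lra.
apply/andP; split; first by apply: mulr_ge0 => //; apply: mulr_ge0; lra.
have : a * b * (a + b - 1) <= 1 * 1 by apply: ler_pM.
lra.
Qed.

Lemma weight0r (R : realFieldType) (a : R) : weight a 0 = 0.
Proof. by rewrite /weight mulr0 !mul0r. Qed.

Lemma convex_step_bounds (R : realFieldType) (m M a b c b' c' : R) :
  0 <= c -> 0 <= c' -> c + c' <= 1 -> m <= a <= M ->
  (c = 0 \/ m <= b <= M) -> (c' = 0 \/ m <= b' <= M) ->
  m <= a + c * (b - a) + c' * (b' - a) <= M.
Proof.
move=> c_ge0 c'_ge0 cc'_le1 /andP[a_ge a_le] hb hb'.
have bound_term (d x : R) : 0 <= d -> (d = 0 \/ m <= x <= M) ->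
    d * (m - a) <= d * (x - a) <= d * (M - a).
  move=> d_ge0 [->|/andP[x_ge x_le]]; first by rewrite !mul0r lexx.
  by apply/andP; split; apply: ler_wpM2l => //; lra.
have /andP[lb ub] := bound_term c b c_ge0 hb.
have /andP[lb' ub'] := bound_term c' b' c'_ge0 hb'.
have lb_sum : m - a <= (c + c') * (m - a).
  by rewrite -[X in X <= _]mul1r; apply: ler_wnM2r; lra.
have ub_sum : (c + c') * (M - a) <= M - a.
  by rewrite -[X in _ <= X]mul1r; apply: ler_wpM2r; lra.
rewrite !mulrDl in lb_sum ub_sum; apply/andP; split; lra.
Qed.

Lemma interiorE (N j : nat) : interior N j = (1 <= j <= N.-1)%N.
Proof. by rewrite /interior; apply/idP/idP => /andP[? ?]; apply/andP; split; lia. Qed.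

Lemma step_interior (R : realFieldType) (N j : nat) (v : nat -> R) :
  interior N j ->
  step N v j = v j + weight (v j) (v j.-1) * (v j.-1 - v j)
                   + weight (v j) (v j.+1) * (v j.+1 - v j).
Proof. by rewrite /step => ->. Qed.

Lemma sol_exterior (R : realFieldType) (N : nat) (u0 : nat -> R) (n j : nat) :
  ~~ interior N j -> sol N u0 n j = 0.
Proof. by case: n => [|n] /negbTE /= out; rewrite ?/step out. Qed.

Section Invariance.
Variables (R : realFieldType) (N : nat) (m M : R).
Hypotheses (m_ge : 1 / 2 <= m) (M_le : M <= 1).

Lemma weight_in_range (a b : R) : m <= a <= M -> b = 0 \/ m <= b <= M ->
  0 <= weight a b <= 1 / 2.
Proof.
have in_unit_half (x : R) : m <= x -> x <= M -> 1 / 2 <= x <= 1.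
  by move=> x_ge x_le; rewrite (le_trans m_ge x_ge) (le_trans x_le M_le).
move=> /andP[a_ge a_le] [->|/andP[b_ge b_le]].
  by rewrite weight0r lexx divr_ge0 ?ler01 ?ler0n.
by apply: weight_bounds; apply: in_unit_half.
Qed.

Lemma step_in_range (v : nat -> R) (j : nat) :
  (forall k, v k = 0 \/ m <= v k <= M) -> interior N j -> m <= v j <= M ->
  m <= step N v j <= M.
Proof.
move=> v_range j_int vj_range; rewrite step_interior //.
have /andP[c_ge0 c_le] := weight_in_range vj_range (v_range j.-1).
have /andP[c'_ge0 c'_le] := weight_in_range vj_range (v_range j.+1).
have zero_weight (b : R) : b = 0 \/ m <= b <= M ->
    weight (v j) b = 0 \/ m <= b <= M.
  by case=> [->|]; [left; exact: weight0r | right].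
apply: convex_step_bounds => //; [lra | exact: zero_weight ..].
Qed.

Lemma sol_in_range (u0 : nat -> R) :
  (forall j, interior N j -> m <= u0 j <= M) ->
  forall n j, interior N j -> m <= sol N u0 n j <= M.
Proof.
move=> u0_range; elim=> [|n IH] j j_int /=; first by rewrite j_int u0_range.
apply: step_in_range => //; last exact: IH.
move=> k; case: (boolP (interior N k)) => k_int.
- by right; exact: IH.
- by left; exact: sol_exterior.
Qed.

End Invariance.

(* The scheme does not involve [tau]. *)
Theorem theorem3p3 (R : realFieldType) (N : nat) (tau : R) (u0 : nat -> R) :
  (2 <= N)%N -> 0 < tau ->
  (forall j, (1 <= j <= N.-1)%N -> 1 / 2 <= u0 j <= 1) ->
  forall (n j : nat), (1 <= j <= N.-1)%N ->
    min_init N u0 <= sol N u0 n j <= max_init N u0.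
Proof.
move=> N_ge2 _ u0_range n j; rewrite -interiorE.
have iota_interior i : (i \in index_iota 1 N) = interior N i.
  by rewrite mem_index_iota.
have /andP[u01_ge u01_le] : 1 / 2 <= u0 1%N <= 1 by apply: u0_range; lia.
have u0_unit i : i \in index_iota 1 N -> 1 / 2 <= u0 i <= 1.
  by rewrite iota_interior interiorE; exact: u0_range.
apply: sol_in_range.
- by rewrite /min_init big_seq; apply: le_bigmin => // i /u0_unit /andP[].
- by rewrite /max_init big_seq; apply: bigmax_le => // i /u0_unit /andP[].
- by move=> i i_int; rewrite ge_bigmin_seq ?le_bigmax_seq ?iota_interior.
Qed.
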